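(* Let $N\ge2$ and $\gamma^1,\dots,\gamma^N>0$ with $\gamma^N=\max\{\gamma^1,\dots,\gamma^N\}$, and let $$\Gamma:=\mathrm{diag}\{\gamma^1,\dots,\gamma^{N-1}\}-\tfrac1N\mathbb 1_{N-1}\mathbb 1_{N-1}^\top\mathrm{diag}\{\gamma^1-\gamma^N,\dots,\gamma^{N-1}-\gamma^N\}\in\mathbb R^{(N-1)\times(N-1)}.$$ Then $\Gamma$ is positive definite, i.e. $b^\top\Gamma b>0$ for all $b\in\mathbb R^{N-1}\setminus\{0\}$, and $\Gamma$ has only positive eigenvalues.
   Context: $\mathbb 1_{N-1}$ is the all-ones vector in $\mathbb R^{N-1}$. Positive definiteness here does not require symmetry ($\Gamma$ is in general not symmetric). *)

From HB Require Import structures.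
From mathcomp Require Import all_boot all_order all_algebra.
From mathcomp Require Import complex.
Set Implicit Arguments. Unset Strict Implicit. Unset Printing Implicit Defensive.
Import Order.TTheory GRing.Theory Num.Theory.
Local Open Scope ring_scope.

(* gamma is indexed 1..N as in the paper: gamma k = gamma^k.
   Row/column index i : 'I_(N-1) (0-based) corresponds to paper index i+1. *)
Definition Gamma_mx (R : rcfType) (N : nat) (gamma : nat -> R) : 'M[R]_(N - 1) :=
  diag_mx (\row_(i < N - 1) gamma i.+1)
  - (N%:R)^-1 *: ((const_mx 1 : 'cV[R]_(N - 1)) *m (const_mx 1 : 'rV[R]_(N - 1))
                  *m diag_mx (\row_(i < N - 1) (gamma i.+1 - gamma N))).

From HB Require Import structures.
From mathcomp Require Import all_boot all_order all_algebra.
From mathcomp Require Import complex.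
From mathcomp Require Import ring lra.
Set Implicit Arguments.
Unset Strict Implicit.
Unset Printing Implicit Defensive.
Import Order.TTheory GRing.Theory Num.Theory.
Local Open Scope ring_scope.

(* Gamma = D + 1 e^T with D = diag(gamma^i) > 0 and e_i = (gamma^N - gamma^i)/N >= 0.
   For the quadratic form put S = sum_i b_i and t = S/N; then
   b^T Gamma b = sum_i gamma^i (b_i^2 - b_i t) + gamma^N N t^2, and since gamma^N
   is maximal and N > N - 1 the last term dominates sum_i gamma^i t^2, leaving
   sum_i gamma^i (b_i^2 - b_i t + t^2) > 0.
   For the spectrum, a (complex) eigenvector x satisfies (z - gamma^i) x_i = s := e^T x;
   multiplying by e_i conj(x_i) and summing gives
   z sum_i e_i |x_i|^2 = sum_i gamma^i e_i |x_i|^2 + |s|^2, so z > 0, unless all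
   e_i |x_i|^2 vanish, in which case s = 0 and z is one of the gamma^i. *)

Lemma Gamma_mxE (R : rcfType) (N : nat) (gamma : nat -> R) :
  Gamma_mx N gamma = diag_mx (\row_i gamma i.+1)
    + const_mx 1 *m \row_(i < N - 1) (N%:R^-1 * (gamma N - gamma i.+1)).
Proof.
apply/matrixP => i j; rewrite /Gamma_mx mul_mx_diag !mxE !big_ord1 !mxE.
by rewrite !mul1r -mulrN opprB.
Qed.

Lemma eigenvalue_trmx (F : fieldType) n (A : 'M[F]_n) a :
  eigenvalue A^T a = eigenvalue A a.
Proof.
rewrite !eigenvalue_root_char /char_poly -[\det (char_poly_mx A)]det_tr.
by congr (root (\det _) a); apply/matrixP => i j; rewrite !mxE eq_sym.
Qed.

Lemma quad_diag_add_ones_rank1 (R : comPzRingType) n (d e : 'I_n -> R) (b : 'cV[R]_n) :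
  (b^T *m (diag_mx (\row_i d i) + const_mx 1 *m \row_i e i) *m b) 0 0
  = \sum_i d i * b i 0 ^+ 2 + (\sum_i b i 0) * \sum_i e i * b i 0.
Proof.
rewrite mulmxDr mulmxDl mxE; congr (_ + _).
  by rewrite mul_mx_diag mxE; apply: eq_bigr => i _; rewrite !mxE; ring.
rewrite mulmxA -mulmxA mxE big_ord1 !mxE; congr (_ * _).
  by apply: eq_bigr => i _; rewrite !mxE mulr1.
by apply: eq_bigr => i _; rewrite !mxE.
Qed.

Lemma sqr_sub_mul_add_sqr_gt0 (R : realDomainType) (b t : R) :
  b != 0 -> 0 < b ^+ 2 - b * t + t ^+ 2.
Proof.
move=> b_neq0; have b2_gt0 : 0 < b ^+ 2 by rewrite exprn_even_gt0.
have : 0 <= (b - 2 * t) ^+ 2 by exact: sqr_ge0.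
nra.
Qed.

Lemma sqr_sub_mul_add_sqr_ge0 (R : realDomainType) (b t : R) :
  0 <= b ^+ 2 - b * t + t ^+ 2.
Proof. have : 0 <= (b - 2 * t) ^+ 2 by exact: sqr_ge0. nra. Qed.

Lemma diag_add_ones_rank1_form_gt0 (R : realFieldType) n m (c : R) (d b : 'I_n -> R) :
  (n <= m)%N -> (forall i, 0 < d i <= c) -> (exists i, b i != 0) ->
  0 < \sum_i d i * b i ^+ 2 + (\sum_i b i) * \sum_i m%:R^-1 * (c - d i) * b i.
Proof.
move=> le_nm d_bnd [j bj_neq0].
have m_gt0 : 0 < m%:R :> R.
  by rewrite ltr0n (leq_trans _ le_nm) // (leq_ltn_trans _ (ltn_ord j)).
set S := \sum_i b i; pose t := S / m%:R.
have form_eq : \sum_i d i * b i ^+ 2 + S * \sum_i m%:R^-1 * (c - d i) * b i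
    = \sum_i d i * (b i ^+ 2 - b i * t) + c * m%:R * t ^+ 2.
  have dot_eq : \sum_i m%:R^-1 * (c - d i) * b i = m%:R^-1 * (c * S - \sum_i d i * b i).
    by rewrite mulr_sumr -sumrB mulr_sumr; apply: eq_bigr => i _; ring.
  have sum_eq : \sum_i d i * (b i ^+ 2 - b i * t)
      = \sum_i d i * b i ^+ 2 - t * \sum_i d i * b i.
    by rewrite mulr_sumr -sumrB; apply: eq_bigr => i _; ring.
  by rewrite dot_eq sum_eq /t; field; rewrite gt_eqF.
have mass : \sum_i d i * t ^+ 2 <= c * m%:R * t ^+ 2.
  apply: (@le_trans _ _ (\sum_(i < n) c * t ^+ 2)).
    by apply: ler_sum => i _; rewrite ler_wpM2r ?sqr_ge0 //; case/andP: (d_bnd i).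
  rewrite sumr_const card_ord -[_ *+ n]mulr_natr [c * m%:R * _]mulrAC ler_wpM2l ?ler_nat //.
  by case/andP: (d_bnd j) => d_gt0 d_le; rewrite mulr_ge0 ?sqr_ge0 ?(le_trans (ltW d_gt0)).
rewrite form_eq; apply: (@lt_le_trans _ _ (\sum_i d i * (b i ^+ 2 - b i * t + t ^+ 2))).
  rewrite (bigD1 j) //= ltr_wpDr //.
    apply: sumr_ge0 => i _; case/andP: (d_bnd i) => /ltW d_ge0 _.
    by rewrite mulr_ge0 ?sqr_sub_mul_add_sqr_ge0.
  by case/andP: (d_bnd j) => d_gt0 _; rewrite mulr_gt0 ?sqr_sub_mul_add_sqr_gt0.
by under eq_bigr => i _ do rewrite mulrDr; rewrite big_split lerD2l.
Qed.

Lemma diag_add_ones_rank1_eigen_gt0 (C : numClosedFieldType) n (d e x : 'I_n -> C) (z : C) :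
  (forall i, 0 < d i) -> (forall i, 0 <= e i) -> (exists j, x j != 0) ->
  (forall i, (z - d i) * x i = \sum_k e k * x k) -> 0 < z.
Proof.
move=> d_gt0 e_ge0 [j xj_neq0] eigen_eq.
set s := \sum_k e k * x k; pose w k := e k * (x k * (x k)^*).
have w_ge0 k : 0 <= w k by rewrite mulr_ge0 ?mul_conjC_ge0.
have weighted : z * \sum_k w k = \sum_k d k * w k + s * s^*.
  have -> : s * s^* = \sum_k (z * w k - d k * w k).
    rewrite {2}/s rmorph_sum mulr_sumr; apply: eq_bigr => k _.
    by rewrite rmorphM /= (geC0_conj (e_ge0 k)) -[s](eigen_eq k) /w; ring.
  by rewrite sumrB -mulr_sumr; ring.
have [W_eq0 | W_neq0] := eqVneq (\sum_k w k) 0.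
  have s_eq0 : s = 0.
    apply: big1 => k _; have /eqP := psumr_eq0P (fun k _ => w_ge0 k) W_eq0 (i := k) isT.
    by rewrite /w !mulf_eq0 conjC_eq0 orbb => /orP[] /eqP ->; rewrite ?mul0r ?mulr0.
  have /eqP := eigen_eq j; rewrite -/s s_eq0 mulf_eq0 (negbTE xj_neq0) orbF subr_eq0.
  by move=> /eqP ->.
have [k /andP[_ wk_gt0]] := psumr_neq0P (fun k _ => w_ge0 k) (elimN eqP W_neq0).
have dw_gt0 : 0 < \sum_k d k * w k.
  rewrite (bigD1 k) //= ltr_wpDr ?(mulr_gt0 (d_gt0 k) wk_gt0) //.
  by apply: sumr_ge0 => i _; rewrite mulr_ge0 ?(ltW (d_gt0 i)).
have W_gt0 : 0 < \sum_k w k by rewrite lt_def W_neq0 sumr_ge0.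
by rewrite -(pmulr_lgt0 z W_gt0) weighted ltr_wpDr ?mul_conjC_ge0.
Qed.

Lemma eigenvalue_diag_add_ones_rank1_gt0 (C : numClosedFieldType) n (d e : 'I_n -> C) z :
  (forall i, 0 < d i) -> (forall i, 0 <= e i) ->
  eigenvalue (diag_mx (\row_i d i) + const_mx 1 *m \row_i e i) z -> 0 < z.
Proof.
(* [eigenvalueP] yields row eigenvectors; those of [A^T] are column eigenvectors of [A]. *)
move=> d_gt0 e_ge0; rewrite -eigenvalue_trmx => /eigenvalueP[v v_eigen /rV0Pn v_neq0].
apply: (diag_add_ones_rank1_eigen_gt0 d_gt0 e_ge0 v_neq0) => i.
move/rowP/(_ i): v_eigen.
rewrite linearD /= trmx_mul tr_diag_mx trmx_const mulmxDr mulmxA mul_mx_diag.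
rewrite !mxE big_ord1 !mxE mulr1 mulrBl => <-.
rewrite mulrC addrAC subrr add0r.
by apply: eq_bigr => k _; rewrite !mxE mulrC.
Qed.

Local Open Scope complex_scope.

Theorem lemma7p1 (R : rcfType) (N : nat) (gamma : nat -> R)
  (hN : (2 <= N)%N)
  (hpos : forall k : nat, (1 <= k <= N)%N -> 0 < gamma k)
  (hmax : forall k : nat, (1 <= k <= N)%N -> gamma k <= gamma N) :
  (forall b : 'cV[R]_(N - 1), b != 0 -> 0 < (b^T *m Gamma_mx N gamma *m b) 0 0)
  /\ (forall z : R[i],
        eigenvalue (map_mx (fun x : R => x%:C) (Gamma_mx N gamma)) z -> 0 < z).
Proof.
have gamma_bnd (i : 'I_(N - 1)) : 0 < gamma i.+1 <= gamma N.
  have i_rng : (1 <= i.+1 <= N)%N := leq_trans (ltn_ord i) (leq_subr 1 N).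
  by rewrite hpos ?hmax.
rewrite Gamma_mxE; split=> [b /cV0Pn b_neq0 | z].
  rewrite quad_diag_add_ones_rank1.
  exact: (diag_add_ones_rank1_form_gt0 (leq_subr 1 N) gamma_bnd b_neq0).
have map_row (g : 'I_(N - 1) -> R) : map_mx (real_complex R) (\row_i g i) = \row_i (g i)%:C.
  by apply/rowP => i; rewrite !mxE.
rewrite map_mxD map_mxM map_diag_mx map_const_mx !map_row.
apply: eigenvalue_diag_add_ones_rank1_gt0 => i; case/andP: (gamma_bnd i) => gamma_gt0 gamma_le.
  by rewrite (ltcR 0).
by rewrite (lecR 0) mulr_ge0 ?invr_ge0 ?ler0n ?subr_ge0.
Qed.
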